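(* Let $I$ be a linearly ordered set, $(\mathcal{A}_i,\phi_i)_{i\in I}$ noncommutative probability spaces, and let $\psi:\bigsqcup_{i\in I}\mathcal{A}_i\to\mathbb{C}$ be the linear functional on the free product without identification of units such that $\psi|_{\mathcal{A}_i}=\phi_i$ for each $i$, $\psi(a_1a_2\cdots a_n)=0$ whenever $a_k\in\mathcal{A}_{i_k}\cap\mathrm{Ker}\,\phi_{i_k}$ and $i_1\ne i_2\ne\cdots\ne i_n$, and $$\psi(a_1\cdots a_{k-1}1_{i_k}a_{k+1}\cdots a_n)=\begin{cases}\psi(a_1\cdots a_{k-1}a_{k+1}\cdots a_n)&\text{if } i_1<i_2<\cdots<i_k,\\ 0&\text{otherwise,}\end{cases}$$ for $1\le k\le n$, where $a_j\in\mathcal{A}_{i_j}\cap\mathrm{Ker}\,\phi_{i_j}$ for $j<k$, $a_j\in\mathcal{A}_{i_j}$ arbitrary for $j>k$, and $1_{i_k}$ is the unit of $\mathcal{A}_{i_k}$ (the empty word having value $1$). Then $\psi$ agrees with the monotone product of the states $\phi_i$, i.e. $\psi(a_1\cdots a_n)=\phi_{i_k}(a_k)\,\psi(a_1\cdots a_{k-1}a_{k+1}\cdots a_n)$ for all $a_j\in\mathcal{A}_{i_j}$ with neighboring elements from different algebras and $i_{k-1}<i_k>i_{k+1}$ (only one inequality if $k\in\{1,n\}$).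
   Context: A noncommutative probability space $(\mathcal{A},\phi)$ is a unital $*$-algebra with a state. $\bigsqcup_{i\in I}\mathcal{A}_i$ denotes the free product of the algebras $\mathcal{A}_i$ in which the units $1_i$ of the different $\mathcal{A}_i$ are not identified. The monotone product of states $\phi_i$ is the state $\phi$ on $\bigsqcup_i\mathcal{A}_i$ given by $\phi(a_1\cdots a_{k-1}a_ka_{k+1}\cdots a_n)=\phi_{i_k}(a_k)\phi(a_1\cdots a_{k-1}a_{k+1}\cdots a_n)$ for $a_j\in\mathcal{A}_{i_j}$ whenever neighboring variables come from different algebras and $i_{k-1}<i_k>i_{k+1}$ (with only one inequality if $k\in\{1,n\}$). *)

From HB Require Import structures.
From mathcomp Require Import all_boot all_order all_algebra.
Set Implicit Arguments. Unset Strict Implicit. Unset Printing Implicit Defensive.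
Import Order.TTheory GRing.Theory Num.Theory.
Local Open Scope ring_scope.

Record ncps (C : numClosedFieldType) := NCPS {
  nc_alg :> algType C;
  nc_star : nc_alg -> nc_alg;
  nc_phi : nc_alg -> C;
  nc_starD : forall a b, nc_star (a + b) = nc_star a + nc_star b;
  nc_starZ : forall (c : C) a, nc_star (c *: a) = (c^*) *: nc_star a;
  nc_starM : forall a b, nc_star (a * b) = nc_star b * nc_star a;
  nc_starK : forall a, nc_star (nc_star a) = a;
  nc_phiD : forall a b, nc_phi (a + b) = nc_phi a + nc_phi b;
  nc_phiZ : forall (c : C) a, nc_phi (c *: a) = c * nc_phi a;
  nc_phi1 : nc_phi 1 = 1;
  nc_phi_pos : forall a, 0 <= nc_phi (nc_star a * a)
}.
Arguments nc_star {C} n _.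
Arguments nc_phi {C} n _.

Section FreeProduct.
Variables (C : numClosedFieldType) (d : Order.disp_t) (I : orderType d).
Variable (A : I -> ncps C).

(* A letter of the free product: an element of some A i, tagged by i.
   Words (seq letter) span the free product without identification of units;
   the empty word is its unit. *)
Definition letter := {i : I & A i}.
Definition mkl (i : I) (a : A i) : letter := existT (fun j => A j) i a.

(* psi : words -> C is (the restriction to words of) a linear functional on
   the free product without identification of units: multilinear in each
   letter and compatible with multiplication of adjacent letters from the
   same algebra. *)
Definition fp_functional (psi : seq letter -> C) : Prop :=
  (forall (u v : seq letter) (i : I) (a b : A i) (c : C),
      psi (u ++ mkl (c *: a + b) :: v)
      = c * psi (u ++ mkl a :: v) + psi (u ++ mkl b :: v)) /\
  (forall (u v : seq letter) (i : I) (a b : A i),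
      psi (u ++ mkl a :: mkl b :: v) = psi (u ++ mkl (a * b) :: v)).

Definition alternating (w : seq letter) : bool :=
  sorted (fun x y : letter => tag x != tag y) w.

Definition centered (x : letter) : bool := nc_phi (A (tag x)) (tagged x) == 0.

Definition last_lt (u : seq letter) (i : I) : bool :=
  if rev u is y :: _ then (tag y < i)%O else true.
Definition head_lt (v : seq letter) (i : I) : bool :=
  if v is y :: _ then (tag y < i)%O else true.

End FreeProduct.

From HB Require Import structures.
From mathcomp Require Import all_boot all_order all_algebra.
Import Order.TTheory GRing.Theory Num.Theory.
Local Open Scope ring_scope.

(* Write each letter a of A_i as phi_i(a) 1_i + (a - phi_i(a) 1_i).  For a centered
   prefix c the unit axiom either deletes a following unit or kills the word, according
   as the indices of c followed by i increase; together with the vanishing of alternating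
   centered words this shows that psi(c w) = 0 for every w once the indices of c fail to
   increase, and that a centered letter followed by a smaller index gives 0.  Expanding
   the letters of u from left to right therefore reduces the claim to a centered prefix c
   with last(c) < i: there the centered part of a contributes 0 and its unit part is
   deleted.  Merging adjacent letters from the same algebra keeps every word alternating
   along the way, so the identity holds for all words u, v. *)

Lemma sorted_rcons_rcons {T : Type} {e : rel T} s x y :
  sorted e (rcons (rcons s x) y) = sorted e (rcons s x) && e x y.
Proof. by case: s => [|h s] /=; rewrite ?andbT // rcons_path last_rcons. Qed.

Lemma sorted_rconsl {T : Type} {e : rel T} {s x} : sorted e (rcons s x) -> sorted e s.
Proof. by rewrite -cats1 => /cat_sorted2 []. Qed.

Section MonotoneProduct.
Variables (C : numClosedFieldType) (d : Order.disp_t) (I : orderType d).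
Variables (A : I -> ncps C) (psi : seq (letter A) -> C).

Local Notation word := (seq (letter A)).
Local Notation tags w := (map tag w).
Local Notation centered := (@centered _ _ _ A).
Local Notation increasing s := (sorted (fun x y : I => (x < y)%O) s).

Lemma alternatingE (w : word) : alternating w = sorted (fun i j : I => i != j) (tags w).
Proof. by rewrite /alternating sorted_map. Qed.

Lemma alternating_mkl (u v : word) i (a b : A i) :
  alternating (u ++ mkl a :: v) = alternating (u ++ mkl b :: v).
Proof. by rewrite !alternatingE !map_cat. Qed.

Lemma last_lt_rcons (u : word) (x : letter A) i : last_lt (rcons u x) i = (tag x < i)%O.
Proof. by rewrite /last_lt rev_rcons. Qed.

Lemma last_lt_cat (u w : word) i : w != [::] -> last_lt (u ++ w) i = last_lt w i.
Proof. by case/lastP: w => // w x _; rewrite -rcons_cat !last_lt_rcons. Qed.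

Lemma last_lt_cons (x : letter A) (w : word) i :
  last_lt (x :: w) i = if w is [::] then (tag x < i)%O else last_lt w i.
Proof. by case: w => [|y w] //; rewrite -cat1s last_lt_cat. Qed.

Lemma alternating_rcons (c : word) (x : letter A) :
  alternating c -> last_lt c (tag x) -> alternating (rcons c x).
Proof.
case/lastP: c => [|c z] //; rewrite last_lt_rcons !alternatingE !map_rcons.
by rewrite sorted_rcons_rcons => -> /lt_eqF ->.
Qed.

Lemma increasing_rcons (c : word) i :
  last_lt c i -> increasing (tags c) -> increasing (rcons (tags c) i).
Proof.
by case/lastP: c => [|c z] //; rewrite last_lt_rcons !map_rcons sorted_rcons_rcons => -> ->.
Qed.

Lemma last_lt_increasing (c : word) j i :
  increasing (rcons (tags c) j) -> (j < i)%O -> last_lt c i.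
Proof.
case/lastP: c => [|c z] //; rewrite last_lt_rcons map_rcons sorted_rcons_rcons.
by case/andP=> _ /lt_trans; apply.
Qed.

Lemma last_lt_skip (c r : word) (x : letter A) i :
  increasing (rcons (tags c) (tag x)) -> last_lt (c ++ x :: r) i -> last_lt (c ++ r) i.
Proof.
case: r => [|y r] inc; last by rewrite !last_lt_cat // [last_lt (x :: _) _]last_lt_cons.
by rewrite cats1 last_lt_rcons cats0; apply: last_lt_increasing.
Qed.

Hypothesis psi_linear : forall (u v : word) (i : I) (a b : A i) (c : C),
  psi (u ++ mkl (c *: a + b) :: v) = c * psi (u ++ mkl a :: v) + psi (u ++ mkl b :: v).
Hypothesis psi_merge : forall (u v : word) (i : I) (a b : A i),
  psi (u ++ mkl a :: mkl b :: v) = psi (u ++ mkl (a * b) :: v).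
Hypothesis psi_alternating_centered : forall w : word,
  w != [::] -> alternating w -> all centered w -> psi w = 0.
Hypothesis psi_unit : forall (u v : word) (i : I),
  alternating (u ++ mkl (1 : A i) :: v) -> all centered u ->
  psi (u ++ mkl (1 : A i) :: v)
  = if increasing (rcons (tags u) i) then psi (u ++ v) else 0.

Definition center {i} (a : A i) : A i := a - nc_phi (A i) a *: 1.

Lemma centered_center i (a : A i) : centered (mkl (center a)).
Proof. by rewrite /centered /= /center -scaleNr nc_phiD nc_phiZ nc_phi1 mulr1 subrr. Qed.

Lemma psi_split (u v : word) i (a : A i) :
  psi (u ++ mkl a :: v)
  = nc_phi (A i) a * psi (u ++ mkl (1 : A i) :: v) + psi (u ++ mkl (center a) :: v).
Proof. by rewrite -psi_linear /center addrC subrK. Qed.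

Definition psi_equiv (w w' : word) := forall p s, psi (p ++ w ++ s) = psi (p ++ w' ++ s).

Lemma psi_equivl {w w' : word} : psi_equiv w w' -> forall s, psi (w ++ s) = psi (w' ++ s).
Proof. by move=> eq_w s; apply: eq_w [::] s. Qed.

Lemma psi_equivr {w w' : word} : psi_equiv w w' -> forall p, psi (p ++ w) = psi (p ++ w').
Proof. by move=> eq_w p; have := eq_w p [::]; rewrite !cats0. Qed.

Lemma alternating_reduct (w : word) : exists2 w', alternating w' &
  [/\ psi_equiv w w', (size w' <= size w)%N, (w' == [::]) = (w == [::]),
      head_lt w' =1 head_lt w & last_lt w' =1 last_lt w].
Proof.
elim: w => [|x w [[|y w'] alt_w' [eq_w' size_w' nil_w' head_w' last_w']]].
- by exists [::].
- have w_nil : w = [::] by apply/eqP; rewrite -nil_w'.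
  by subst w; exists [:: x].
have w_nil : w != [::] by rewrite -nil_w'.
have last_x i : last_lt (x :: w) i = last_lt (y :: w') i.
  by rewrite last_lt_cons -last_w'; case: (w) w_nil.
rewrite alternatingE in alt_w'.
case: (eqVneq (tag x) (tag y)) => [|tag_xy].
  case: x y {last_w' head_w' nil_w'} last_x eq_w' alt_w' size_w' => [j a] [k b] /=.
  move=> + + + + eq_jk; subst k => last_x eq_w' alt_w' size_w'.
  exists (mkl (a * b) :: w'); first by rewrite alternatingE.
  split=> //.
  - by move=> p s; rewrite -cat_rcons eq_w' cat_rcons -psi_merge.
  - by apply: leq_trans size_w' _.
  - by move=> i; rewrite last_x !last_lt_cons.
exists (x :: y :: w') => //; first by rewrite alternatingE /= tag_xy.
split=> //; first by move=> p s; rewrite -cat_rcons eq_w' cat_rcons.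
by move=> i; rewrite last_x last_lt_cons.
Qed.

Lemma psi_unsorted_centered (v c : word) (y : letter A) :
  all centered c -> alternating (c ++ y :: v) ->
  ~~ increasing (rcons (tags c) (tag y)) -> psi (c ++ y :: v) = 0.
Proof.
elim: v c y => [|y' v IHv] c [j b] c_cen alt /= not_inc.
all: rewrite psi_split psi_unit ?(negbTE not_inc) ?mulr0 ?add0r //;
  last by rewrite (alternating_mkl _ _ _ _ b).
  apply: psi_alternating_centered; first by case: (c).
    by rewrite (alternating_mkl _ _ _ _ b).
  by rewrite all_cat c_cen /= centered_center.
rewrite -cat_rcons; apply: IHv.
- by rewrite all_rcons centered_center.
- by rewrite cat_rcons (alternating_mkl _ _ _ _ b).
- by rewrite !map_rcons; apply: contra not_inc => /sorted_rconsl.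
Qed.

Lemma psi_unsorted_prefix (c w : word) :
  all centered c -> alternating c -> ~~ increasing (tags c) -> psi (c ++ w) = 0.
Proof.
move=> c_cen alt_c not_inc; have [w' alt_w' [eq_w' _ _ _ _]] := alternating_reduct w.
rewrite (psi_equivr eq_w'); case: w' alt_w' {eq_w'} => [|y w'] alt_w'.
  by rewrite cats0; apply: psi_alternating_centered => //; case: (c) not_inc.
case/lastP: c c_cen alt_c not_inc => [//|c z] c_cen.
rewrite alternatingE map_rcons => alt_c not_inc; rewrite alternatingE in alt_w'.
case: (eqVneq (tag z) (tag y)) => [|tag_zy].
  case: z y c_cen alt_c alt_w' not_inc => [j a] [k b] /= + + + + eq_jk.
  subst k; rewrite all_rcons => /andP[_ c_cen] alt_c alt_w' not_inc.
  rewrite -cats1 -catA /= psi_merge; apply: psi_unsorted_centered => //.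
  by rewrite alternatingE map_cat sorted_cat_cons alt_c.
apply: psi_unsorted_centered => //.
- by rewrite alternatingE map_cat map_rcons sorted_cat_cons sorted_rcons_rcons alt_c tag_zy.
- by rewrite map_rcons; apply: contra not_inc => /sorted_rconsl.
Qed.

Lemma psi_unit_prefix (c w : word) j :
  all centered c -> alternating (rcons c (mkl (1 : A j))) ->
  psi (c ++ mkl (1 : A j) :: w)
  = if increasing (rcons (tags c) j) then psi (c ++ w) else 0.
Proof.
move=> c_cen; rewrite alternatingE map_rcons => alt_c.
have [w' alt_w' [eq_w' _ _ _ _]] := alternating_reduct w.
rewrite -cat_rcons !(psi_equivr eq_w') cat_rcons; rewrite alternatingE in alt_w'.
case: w' alt_w' {eq_w'} => [|[k b] w'] alt_w'.
  by rewrite psi_unit // alternatingE map_cat sorted_cat_cons alt_c.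
case: (eqVneq k j) => [eq_kj|ne_kj].
  subst k; rewrite psi_merge mul1r; case: ifPn => // not_inc.
  by apply: psi_unsorted_centered; rewrite // alternatingE map_cat sorted_cat_cons alt_c.
by rewrite psi_unit // alternatingE map_cat sorted_cat_cons alt_c /= eq_sym ne_kj.
Qed.

Lemma psi_centered_peak (c v : word) (x : letter A) :
  all centered (rcons c x) -> alternating (rcons c x) -> head_lt v (tag x) ->
  psi (c ++ x :: v) = 0.
Proof.
move=> cx_cen alt_cx head_v; have [v' alt_v' [eq_v' _ _ head_v' _]] := alternating_reduct v.
rewrite -cat_rcons (psi_equivr eq_v'); rewrite -head_v' in head_v.
case: v' alt_v' head_v {eq_v' head_v'} => [|y v'] alt_v' /= lt_yx.
  by rewrite cats0; apply: psi_alternating_centered; rewrite // -size_eq0 size_rcons.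
rewrite alternatingE map_rcons in alt_cx; rewrite alternatingE in alt_v'.
apply: psi_unsorted_centered => //.
  by rewrite alternatingE map_cat map_rcons sorted_cat_cons sorted_rcons_rcons alt_cx gt_eqF.
by rewrite map_rcons sorted_rcons_rcons lt_gtF ?andbF.
Qed.

Definition monotone_at (u : word) : Prop :=
  forall (v : word) i (a : A i), last_lt u i -> head_lt v i ->
    psi (u ++ mkl a :: v) = nc_phi (A i) a * psi (u ++ v).

Lemma monotone_at_centered (c : word) :
  all centered c -> alternating c -> monotone_at c.
Proof.
move=> c_cen alt_c v i a last_c head_v.
have peak : psi (c ++ mkl (center a) :: v) = 0.
  apply: psi_centered_peak => //; first by rewrite all_rcons centered_center.
  exact: alternating_rcons.
rewrite psi_split peak addr0 psi_unit_prefix //; last exact: alternating_rcons.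
case: ifPn => // not_inc; rewrite psi_unsorted_prefix ?mulr0 //.
by apply: contra not_inc; apply: increasing_rcons.
Qed.

Lemma monotone_at_centered_cat (r c : word) :
  (forall u : word, size u < size (c ++ r) -> monotone_at u)%N ->
  all centered c -> alternating (c ++ r) -> monotone_at (c ++ r).
Proof.
elim: r c => [|[j b] r IHr] c IHsize c_cen alt_cr v i a last_cr head_v.
  by rewrite cats0 in alt_cr last_cr *; apply: monotone_at_centered.
have alt_c1 : alternating (rcons c (mkl (1 : A j))).
  by move: alt_cr; rewrite !alternatingE map_cat map_rcons sorted_cat_cons => /andP[].
have IHcenter : psi (c ++ mkl (center b) :: r ++ mkl a :: v)
                = nc_phi (A i) a * psi (c ++ mkl (center b) :: r ++ v).
  rewrite -!(cat_rcons _ c) !catA; apply: IHr => //.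
  - by move=> u lt_u; apply: IHsize; move: lt_u; rewrite !size_cat size_rcons addnS.
  - by rewrite all_rcons centered_center.
  - by rewrite cat_rcons (alternating_mkl _ _ _ _ b).
  - by move: last_cr; rewrite cat_rcons !last_lt_cat // !last_lt_cons.
have IHunit : increasing (rcons (tags c) j) ->
              psi (c ++ r ++ mkl a :: v) = nc_phi (A i) a * psi (c ++ r ++ v).
  move=> inc; rewrite !catA; apply: IHsize => //; last exact: last_lt_skip last_cr.
  by rewrite !size_cat /= addnS.
rewrite -!catA /= (psi_split c (r ++ _)) (psi_split c (r ++ v)) IHcenter.
rewrite !psi_unit_prefix //.
by case: ifPn => [/IHunit->|_]; rewrite ?mulr0 ?add0r // mulrDr mulrCA.
Qed.

Lemma monotone_at_all (u : word) : monotone_at u.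
Proof.
have [n] := ubnP (size u); elim: n u => // n IHn u size_u.
have [u' alt_u' [eq_u' size_u' _ _ last_u']] := alternating_reduct u.
move=> v i a; rewrite -last_u' !(psi_equivl eq_u') => last_i head_v.
apply: (@monotone_at_centered_cat u' [::]) => // w size_w; apply: IHn.
exact: leq_trans size_w (leq_trans size_u' size_u).
Qed.

End MonotoneProduct.

Theorem theorem2p3 (C : numClosedFieldType) (d : Order.disp_t) (I : orderType d)
  (A : I -> ncps C) (psi : seq (letter A) -> C) :
  fp_functional psi ->
  psi [::] = 1 ->
  (forall (i : I) (a : A i), psi [:: mkl a] = nc_phi (A i) a) ->
  (forall w : seq (letter A),
      w != [::] -> alternating w -> all (@centered _ _ _ A) w -> psi w = 0) ->
  (forall (u v : seq (letter A)) (i : I),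
      alternating (u ++ mkl (1 : A i) :: v) -> all (@centered _ _ _ A) u ->
      psi (u ++ mkl (1 : A i) :: v)
      = if sorted (fun x y : I => (x < y)%O) (rcons (map tag u) i)
        then psi (u ++ v) else 0) ->
  forall (u v : seq (letter A)) (i : I) (a : A i),
    alternating (u ++ mkl a :: v) -> last_lt u i -> head_lt v i ->
    psi (u ++ mkl a :: v) = nc_phi (A i) a * psi (u ++ v).
Proof.
(* Both sides are linear in psi, so its normalisation on words of length 0 and 1 is
   irrelevant. *)
move=> [psi_linear psi_merge] _ _ psi_alternating_centered psi_unit u v i a _.
exact: monotone_at_all psi_linear psi_merge psi_alternating_centered psi_unit u v i a.
Qed.
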